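(* Let $G$ be a finite connected simple graph with shortest-path distance $d$. The following are equivalent: (1) $G$ is ptolemaic, i.e. $d(x,y)d(z,w)+d(y,z)d(x,w)\ge d(x,z)d(y,w)$ for all vertices $x,y,z,w$; (2) for all vertices $x,y,z,w$ with $y\neq z$, $d(x,y)+d(y,z)=d(x,z)$ and $d(y,z)+d(z,w)=d(y,w)$, one has $d(x,y)+d(y,z)+d(z,w)=d(x,w)$; (3) for all vertices $x,y,z,w$ with $d(x,y)+d(y,z)=d(x,z)$, $d(y,z)+d(z,w)=d(y,w)$ and $d(x,y)=d(y,z)=1$, one has $d(x,y)+d(y,z)+d(z,w)=d(x,w)$; (4) $G$ is chordal (has no induced cycle of length at least $4$) and distance-hereditary (every induced path is a shortest path). *)

(* Finite simple graphs as a symmetric irreflexive relation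
   e : rel T on a finType T. *)
From mathcomp Require Import all_boot.
Set Implicit Arguments. Unset Strict Implicit. Unset Printing Implicit Defensive.

Section Graph.
Variables (T : finType) (e : rel T).

Definition walkb (n : nat) (x y : T) : bool :=
  [exists p : n.-tuple T, path e x p && (last x p == y)].

(* shortest-path distance: the least n with a walk of length n from x to y
   (searched among 0 .. #|T|-1, which suffices in a connected graph) *)
Definition gdist (x y : T) : nat := find (fun n => walkb n x y) (iota 0 #|T|).

Definition gconnected : Prop := forall x y : T, connect e x y.

Definition ptolemaic : Prop :=
  forall x y z w : T,
    gdist x y * gdist z w + gdist y z * gdist x w >= gdist x z * gdist y w.

Definition induced_cycle (k : nat) (v : 'I_k -> T) : Prop :=
  injective v /\
  forall i j : 'I_k,
    e (v i) (v j) = ((val j == (val i).+1 %% k) || (val i == (val j).+1 %% k)).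

Definition chordal : Prop :=
  forall (k : nat) (v : 'I_k -> T), 4 <= k -> ~ induced_cycle v.

Definition induced_path (k : nat) (v : 'I_k.+1 -> T) : Prop :=
  injective v /\
  forall i j : 'I_k.+1,
    e (v i) (v j) = ((val j == (val i).+1) || (val i == (val j).+1)).

Definition distance_hereditary : Prop :=
  forall (k : nat) (v : 'I_k.+1 -> T),
    induced_path v -> gdist (v ord0) (v ord_max) = k.

End Graph.

(* (1) => (2): Ptolemy at x y z w, with x y z and y z w on geodesics, reduces to
   d(y,z) (d(x,y) + d(y,z) + d(z,w)) <= d(y,z) d(x,w).  (2) follows from its special
   case (3) by gluing a geodesic onto y z one edge at a time.  Under (3), a walk whose
   vertices two steps apart are distinct and non-adjacent is a shortest path; induced
   paths are such walks, and so is an induced cycle of length >= 4 minus one edge,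
   although its ends are adjacent.  Conversely, if x y z and y z ... w are geodesics
   in a chordal distance-hereditary graph, x y z ... w is an induced path unless x is
   adjacent to the vertex after z, which closes an induced 4-cycle.
   (2) => (1): take a violating quadruple x y z w minimising the sum of its six
   distances.  At each corner, say x, gluing and minimality leave two options: x lies
   on a geodesic from y to w, or x has adjacent neighbours t, u one step closer to y
   and to w respectively, both one step closer to z, and Ptolemy at t and at u bounds
   the distances.  By gluing, two adjacent corners are not both of the first kind; the
   arithmetic then forces sides 2 and diagonals 3, a square which Ptolemy at a few
   smaller quadruples around the corners x and z excludes. *)

From mathcomp Require Import all_boot zify.
Set Implicit Arguments. Unset Strict Implicit. Unset Printing Implicit Defensive.

(** * Walks and the path metric *)

Section Walks.
Variables (T : finType) (e : rel T).
Local Notation walk := (walkb e).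

Lemma walkb0 x y : walk 0 x y = (x == y).
Proof.
apply/existsP/eqP => [[p]|->]; last by exists [tuple]; rewrite /= eqxx.
by case: p => [[|]] //= _ /eqP.
Qed.

Lemma walkbSP n x y : reflect (exists2 u, e x u & walk n u y) (walk n.+1 x y).
Proof.
apply: (iffP existsP) => [[p]|[u xu /existsP[p /andP[pp lp]]]].
  case/tupleP: p => u p /= /andP[/andP[xu pp] lp].
  by exists u => //; apply/existsP; exists p; rewrite pp.
by exists [tuple of u :: p]; rewrite /= xu pp.
Qed.

Lemma walkb_cat m n x y z : walk m x y -> walk n y z -> walk (m + n) x z.
Proof.
elim: m x => [|m IHm] x; first by rewrite walkb0 => /eqP->.
by case/walkbSP=> u xu uy yz; apply/walkbSP; exists u; last exact: IHm uy yz.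
Qed.

Hypothesis e_sym : symmetric e.

Lemma walkb_sym n x y : walk n x y -> walk n y x.
Proof.
elim: n x => [|n IHn] x; first by rewrite !walkb0 eq_sym.
case/walkbSP=> u xu /IHn uy; rewrite -addn1; apply: walkb_cat uy _.
by apply/walkbSP; exists x; rewrite 1?e_sym // walkb0.
Qed.

End Walks.

Section Distance.
Variables (T : finType) (e : rel T).
Hypotheses (e_sym : symmetric e) (e_irr : irreflexive e) (e_conn : gconnected e).
Local Notation d := (gdist e).

Lemma has_walkb x y : has (fun n => walkb e n x y) (iota 0 #|T|).
Proof.
case/connectP: (e_conn x y) => p xp ->.
have [p' xp' up' _] := shortenP xp.
apply/hasP; exists (size p').
  by rewrite mem_iota add0n; have := max_card (mem (x :: p')); rewrite (card_uniqP up').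
by apply/existsP; exists (in_tuple p'); rewrite xp' eqxx.
Qed.

Lemma gdist_lt x y : d x y < #|T|.
Proof. by have := has_walkb x y; rewrite has_find size_iota. Qed.

Lemma gdist_walkb x y : walkb e (d x y) x y.
Proof. by have := nth_find 0 (has_walkb x y); rewrite nth_iota ?gdist_lt. Qed.

Lemma gdist_min n x y : walkb e n x y -> d x y <= n.
Proof.
move=> xy; rewrite leqNgt; apply/negP => lt_n.
have := before_find 0 lt_n.
by rewrite nth_iota ?(ltn_trans lt_n (gdist_lt x y)) // add0n xy.
Qed.

Lemma gdist_refl x : d x x = 0.
Proof. by apply/eqP; rewrite -leqn0 gdist_min // walkb0. Qed.

Lemma gdist_eq0 x y : d x y = 0 -> x = y.
Proof. by move=> xy; apply/eqP; rewrite -(walkb0 e) -xy gdist_walkb. Qed.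

Lemma gdist_gt0 x y : (0 < d x y) = (x != y).
Proof.
by rewrite lt0n; congr negb; apply/eqP/eqP => [/gdist_eq0 | ->]; rewrite ?gdist_refl.
Qed.

Lemma gdist_sym x y : d x y = d y x.
Proof. by apply/eqP; rewrite eqn_leq !gdist_min // walkb_sym // gdist_walkb. Qed.

Lemma gdist_triangle x y z : d x z <= d x y + d y z.
Proof. by apply: gdist_min; apply: walkb_cat; apply: gdist_walkb. Qed.

Lemma gdist1 x y : (d x y == 1) = e x y.
Proof.
apply/eqP/idP => [xy | exy].
  by have := gdist_walkb x y; rewrite xy => /walkbSP[u xu]; rewrite walkb0 => /eqP<-.
apply/eqP; rewrite eqn_leq gdist_min; last by apply/walkbSP; exists y; rewrite ?walkb0.
by rewrite lt0n; apply: contraTneq exy => /gdist_eq0->; rewrite e_irr.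
Qed.

Lemma gdist_edge x y : e x y -> d x y = 1.
Proof. by rewrite -gdist1 => /eqP. Qed.

Lemma gdist_edge_le x t z : e x t -> d x z <= (d t z).+1.
Proof. by move=> xt; rewrite -add1n -(gdist_edge xt) gdist_triangle. Qed.

Lemma gdist_step x y : 0 < d x y -> exists2 t, e x t & (d t y).+1 = d x y.
Proof.
have := gdist_walkb x y; case E: (d x y) => [|n] // /walkbSP[t xt ty] _.
exists t => //; apply/eqP; rewrite eqn_leq ltnS gdist_min //= -E.
exact: gdist_edge_le.
Qed.

(** * Gluing geodesics, chordality and distance-heredity *)

Definition geodesic_gluing : Prop :=
  forall x y z w : T, y != z ->
    d x y + d y z = d x z -> d y z + d z w = d y w ->
    d x y + d y z + d z w = d x w.

Definition edge_gluing : Prop :=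
  forall x y z w : T,
    d x y + d y z = d x z -> d y z + d z w = d y w ->
    d x y = 1 -> d y z = 1 ->
    d x y + d y z + d z w = d x w.

Lemma ptolemaic_geodesic_gluing : ptolemaic e -> geodesic_gluing.
Proof.
move=> ptol x y z w yz xyz yzw.
have b_gt0 : 0 < d y z by rewrite gdist_gt0.
have := ptol x y z w; rewrite -xyz -yzw => ptol_xyzw.
have : d y z * (d x y + d y z + d z w) <= d y z * d x w by nia.
by rewrite leq_pmul2l // => le_xw; have := gdist_triangle x y w; lia.
Qed.

Section EdgeGluing.
Hypothesis glue1 : edge_gluing.
Arguments glue1 : clear implicits.

Lemma edge_gluing_left x y z w :
  d y z = 1 -> (d x y).+1 = d x z -> (d z w).+1 = d y w -> d x y + 1 + d z w = d x w.
Proof.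
have [n xy] : exists n, d x y = n by exists (d x y).
elim: n x y z xy => [|n IHn] x y z xy yz xyz yzw.
  by rewrite (gdist_eq0 xy) gdist_refl add0n add1n.
have [y' yy' y'x] : exists2 y', e y y' & (d y' x).+1 = d y x.
  by apply: gdist_step; rewrite gdist_sym xy.
rewrite (gdist_sym y x) (gdist_sym y' x) in y'x.
have y'y : d y' y = 1 by rewrite gdist_sym gdist_edge.
have y'z : d y' z = 2.
  by have := gdist_triangle x y' z; have := gdist_triangle y' y z; lia.
have y'w := glue1 y' y z w ltac:(lia) ltac:(lia) y'y yz.
have := IHn x y' y; rewrite y'y; lia.
Qed.

Lemma edge_gluing_geodesic : geodesic_gluing.
Proof.
move=> x y z w; have [n yz_n] : exists n, d y z = n by exists (d y z).
elim: n x y z w yz_n => [|n IHn] x y z w yz_n yz xyz yzw.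
  by move/gdist_eq0: yz_n yz => ->; rewrite eqxx.
case: n IHn yz_n => [|n] IHn yz_n.
  by rewrite yz_n; apply: edge_gluing_left; lia.
have [y1 yy1 y1z] := gdist_step (ltac:(lia) : 0 < d y z).
have yy1_1 := gdist_edge yy1.
have xy1 : d x y1 = d x y + 1.
  by have := gdist_triangle x y y1; have := gdist_triangle x y1 z; lia.
have y1w : d y1 w = n.+1 + d z w.
  by have := gdist_triangle y1 z w; have := gdist_triangle y y1 w; lia.
have y1z_neq : y1 != z by rewrite -gdist_gt0; lia.
have := IHn x y1 z w ltac:(lia) y1z_neq; rewrite xy1 y1w; lia.
Qed.

Lemma edge_gluing_walk_gdist n (v : nat -> T) :
  (forall i, i < n -> e (v i) (v i.+1)) ->
  (forall i, i.+2 <= n -> (v i != v i.+2) && ~~ e (v i) (v i.+2)) ->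
  d (v 0) (v n) = n.
Proof.
elim/ltn_ind: n v => -[|[|n]] IHn v edges no_chord.
- exact: gdist_refl.
- exact: gdist_edge (edges 0 isT).
have v1n : d (v 1) (v n.+2) = n.+1.
  by apply: (IHn n.+1 _ (fun i => v i.+1)) => // i lt_i; [apply: edges | apply: no_chord].
have v2n : d (v 2) (v n.+2) = n.
  by apply: (IHn n _ (fun i => v i.+2)) => // i lt_i; [apply: edges | apply: no_chord].
have v01 := gdist_edge (edges 0 isT); have v12 := gdist_edge (edges 1 isT).
have v02 : d (v 0) (v 2) = 2.
  have /andP[v02_neq v02_nedge] := no_chord 0 isT.
  have := gdist_triangle (v 0) (v 1) (v 2); rewrite v01 v12.
  have : 0 < d (v 0) (v 2) by rewrite gdist_gt0.
  have : d (v 0) (v 2) != 1 by rewrite gdist1.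
  lia.
have := glue1 (v 0) (v 1) (v 2) (v n.+2); rewrite v01 v12 v02 v1n v2n; lia.
Qed.

Lemma edge_gluing_chordal : chordal e.
Proof.
move=> [|[|[|[|m]]]] // v _ [v_inj v_edge].
pose w i := v (inord i).
have w_val i : i <= m.+3 -> \val (inord i : 'I_m.+4) = i by move=> le_i; exact: inordK.
have w0m : d (w 0) (w m.+3) = 1.
  by apply/eqP; rewrite gdist1 /w v_edge !w_val //= modnn.
suff : d (w 0) (w m.+3) = m.+3 by rewrite w0m.
apply: edge_gluing_walk_gdist => [i lt_i | i le_i].
  by rewrite /w v_edge !w_val ?(modn_small (_ : i.+1 < m.+4)) ?eqxx //; lia.
rewrite /w (inj_eq v_inj) -val_eqE v_edge !w_val //=; try lia.
rewrite (modn_small (_ : i.+1 < m.+4)); last lia.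
have [i3 | i3] := eqVneq i.+3 m.+4; first by rewrite i3 modnn; lia.
by rewrite modn_small; lia.
Qed.

Lemma edge_gluing_distance_hereditary : distance_hereditary e.
Proof.
move=> k v [v_inj v_edge]; pose w i := v (inord i).
have w_val i : i <= k -> \val (inord i : 'I_k.+1) = i by move=> le_i; exact: inordK.
have -> : v ord0 = w 0 by congr v; apply: val_inj; rewrite w_val.
have -> : v ord_max = w k by congr v; apply: val_inj; rewrite w_val.
apply: edge_gluing_walk_gdist => [i lt_i | i le_i].
  by rewrite /w v_edge !w_val ?eqxx //; lia.
by rewrite /w (inj_eq v_inj) -val_eqE v_edge !w_val //=; lia.
Qed.
End EdgeGluing.

Lemma gdist_geodesic z w : exists g : nat -> T,
  [/\ g 0 = z, g (d z w) = w, forall i, i < d z w -> e (g i) (g i.+1)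
    & forall i j, i <= j <= d z w -> d (g i) (g j) = j - i].
Proof.
have [g [g0 gn g_edge g_w]] : exists g : nat -> T,
    [/\ g 0 = z, g (d z w) = w, forall i, i < d z w -> e (g i) (g i.+1)
      & forall i, i <= d z w -> d (g i) w = d z w - i].
  move: {2}(d z w) (erefl (d z w)) => n; elim: n z => [|n IHn] z zw.
    by exists (fun=> z); rewrite zw; split=> //; exact: gdist_eq0.
  have [u zu uw] := gdist_step (ltac:(lia) : 0 < d z w).
  have {}uw : d u w = n by lia.
  have [g [g0 gn g_edge g_w]] := IHn u uw; rewrite uw in gn g_edge g_w.
  exists (fun i => if i is j.+1 then g j else z); rewrite zw; split=> //.
  - by case=> [|i] lt_i /=; [rewrite g0 | apply: g_edge].
  - by case=> [|i] lt_i /=; [rewrite zw | rewrite g_w].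
have g_walk i k : i + k <= d z w -> walkb e k (g i) (g (i + k)).
  elim: k => [|k IHk] le_k; first by rewrite addn0 walkb0.
  rewrite addnS -[k.+1]addn1; apply: walkb_cat (IHk _) _; first lia.
  by apply/walkbSP; exists (g (i + k).+1); rewrite ?walkb0 // g_edge //; lia.
exists g; split=> // i j /andP[le_ij le_j]; apply/eqP; rewrite eqn_leq.
rewrite -{1}(subnKC le_ij) gdist_min ?g_walk ?subnKC //=.
by have := gdist_triangle (g i) (g j) w; rewrite !g_w //; lia.
Qed.

Lemma induced_path_of_gdist k (v : nat -> T) :
  (forall i j, i < j <= k -> 0 < d (v i) (v j) /\ (d (v i) (v j) == 1) = (j == i.+1)) ->
  induced_path e (fun i : 'I_k.+1 => v i).
Proof.
move=> v_dist; have lt_gdist (i j : 'I_k.+1) : i < j -> 0 < d (v i) (v j) /\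
    (e (v i) (v j) = (j == i.+1 :> nat)).
  by move=> lt_ij; rewrite -gdist1; apply: v_dist; rewrite lt_ij -ltnS ltn_ord.
split=> [i j /= vij | i j /=].
  apply: val_inj; apply/eqP; apply: contraT => ne_ij.
  wlog lt_ij : i j vij {ne_ij} / i < j.
    by move=> wl; case: ltngtP ne_ij => // ? _; [apply: (wl i j) | apply: (wl j i)].
  by have [] := lt_gdist i j lt_ij; rewrite vij gdist_refl.
case: (ltngtP i j) => [lt_ij | lt_ji | /val_inj->]; last by rewrite e_irr; lia.
- have [_ ->] := lt_gdist i j lt_ij.
  by rewrite (_ : (i == j.+1 :> nat) = false) ?orbF //; lia.
- rewrite e_sym; have [_ ->] := lt_gdist j i lt_ji.
  by rewrite (_ : (j == i.+1 :> nat) = false) //; lia.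
Qed.

Lemma induced_cycle4 a b c f :
  e a b -> e b c -> e c f -> e f a -> a != c -> b != f -> ~~ e a c -> ~~ e b f ->
  induced_cycle e (fun i : 'I_4 => nth a [:: a; b; c; f] i).
Proof.
move=> ab bc cf fa ac bf nac nbf.
have ne x y : e x y -> x != y by apply: contraTneq => ->; rewrite e_irr.
have abcf : uniq [:: a; b; c; f].
  rewrite /= !inE !negb_or ac bf (eq_sym a f).
  by rewrite (ne _ _ ab) (ne _ _ bc) (ne _ _ cf) (ne _ _ fa).
split=> [i j /eqP | i j]; first by rewrite nth_uniq // => /eqP/val_inj.
case: i => -[|[|[|[|i]]]] // ?; case: j => -[|[|[|[|j]]]] //= ?;
  rewrite ?e_irr ?(e_sym b a) ?(e_sym c b) ?(e_sym c a) ?(e_sym f c) ?(e_sym f b) ?(e_sym a f);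
  by rewrite ?(negbTE nac) ?(negbTE nbf) ?ab ?bc ?cf ?fa ?modnn ?modn_small.
Qed.

Lemma chordal_distance_hereditary_edge_gluing :
  chordal e -> distance_hereditary e -> edge_gluing.
Proof.
move=> chordal_e dh_e x y z w xyz yzw xy yz; rewrite xy yz in xyz yzw *.
have [g [g0 gn g_edge g_dist]] := gdist_geodesic z w.
set n := d z w in gn g_edge g_dist yzw *.
have y_g i : i <= n -> d y (g i) = i.+1.
  move=> le_i; have := gdist_triangle y z (g i); have := gdist_triangle y (g i) w.
  have z_g : d z (g i) = i by rewrite -g0 g_dist ?le_i // subn0.
  have g_w : d (g i) w = n - i by rewrite -gn g_dist ?le_i ?leqnn.
  lia.
have [n0 | n_gt0] := posnP n.
  by move: g0 gn; rewrite n0 => -> zw; rewrite -zw -xyz.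
have [x_g1 | x_ng1] := boolP (e x (g 1)).
  case: (chordal_e 4 _ isT (@induced_cycle4 x y z (g 1) _ _ _ _ _ _ _ _)).
  - by rewrite -gdist1 xy.
  - by rewrite -gdist1 yz.
  - by rewrite -g0 g_edge.
  - by rewrite e_sym.
  - by apply/eqP => xz; move: xyz; rewrite xz gdist_refl.
  - by apply/eqP => yg; move: (y_g 1 n_gt0); rewrite yg gdist_refl.
  - by rewrite -gdist1 -xyz.
  - by rewrite -gdist1 y_g.
have x_g m : m <= n -> 1 < d x (g m).
  move=> le_m; have := gdist_triangle y x (g m); rewrite (gdist_sym y x) xy y_g //.
  case: m le_m => [_ _ | [|m] le_m]; [by rewrite g0 -xyz | | lia].
  by rewrite add1n ltnS => pos; rewrite ltn_neqAle eq_sym gdist1 x_ng1.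
pose v i := if i is i'.+1 then if i' is j.+1 then g j else y else x.
suff v_path : induced_path e (fun i : 'I_n.+3 => v i).
  by have := dh_e _ _ v_path; rewrite /= gn => ->; lia.
apply: induced_path_of_gdist => -[|[|i]] [|[|j]] //= ij.
- by rewrite xy.
- by have := x_g j ij; case: (d x (g j)) => [|[]].
- by rewrite y_g.
- by rewrite g_dist; lia.
Qed.

(** * Ptolemy's inequality from gluing *)

(* At the corner x of a quadrilateral x y z w with sides a b c f (xy, yz, zw, wx)
   and diagonals p q (xz, yw): either x is on a geodesic from y to w, or the
   bounds given by Ptolemy at the two neighbours of a split corner hold. *)
Definition corner_condition (a b c f p q : nat) : Prop :=
  q = a + f \/
  [/\ q.+1 = a + f, p * q + c <= a * c + b * f + q & p * q + b <= a * c + b * f + q].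

Lemma opposite_tight_corners_arith a b p :
  a * a + b * b < p * p.+1 -> p.+1 = a + b ->
  p.+1 * p + b <= a * a + b * b + p -> p.+1 * p + a <= a * a + b * b + p -> False.
Proof. nia. Qed.

Lemma loose_corners_arith a b q :
  a * a + b * b < q * q -> q.+1 = a + b ->
  q * q + a <= a * a + b * b + q -> q * q + b <= a * a + b * b + q -> a = 2 /\ b = 2.
Proof. nia. Qed.

Lemma corner_conditions_square a b c f p q :
  a * c + b * f < p * q ->
  corner_condition a b c f p q -> corner_condition b c f a q p ->
  corner_condition c f a b p q -> corner_condition f a b c q p ->
  (q = a + f -> p = b + a -> False) -> (p = b + a -> q = c + b -> False) ->
  (q = c + b -> p = f + c -> False) -> (p = f + c -> q = a + f -> False) ->
  [/\ a = 2, b = 2, c = 2, f = 2 & p = 3 /\ q = 3].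
Proof.
move=> hp [x|[x x1 x2]] [y|[y y1 y2]] [z|[z z1 z2]] [w|[w w1 w2]] xy yz zw wx;
  try by [case: xy | case: yz | case: zw | case: wx]; try lia.
all: have [ca fb] : c = a /\ f = b by lia.
all: subst c f.
- have qp : q = p.+1 by lia.
  by subst q; exfalso; apply: (@opposite_tight_corners_arith a b p); lia.
- have pq : p = q.+1 by lia.
  by subst p; exfalso; apply: (@opposite_tight_corners_arith a b q); lia.
- have pq : p = q by lia.
  have [a2 b2] : a = 2 /\ b = 2 by subst p; apply: (@loose_corners_arith a b q); lia.
  by split; lia.
Qed.

Section Ptolemy.
Hypothesis glue : geodesic_gluing.
Arguments glue : clear implicits.

Definition ptolemy_at x y z w : bool :=
  d x z * d y w <= d x y * d z w + d y z * d x w.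

Definition dist_sum x y z w : nat :=
  d x y + d y z + d z w + d x w + d x z + d y w.

Definition minimal_violation x y z w : Prop :=
  ~~ ptolemy_at x y z w /\
  forall x' y' z' w', dist_sum x' y' z' w' < dist_sum x y z w -> ptolemy_at x' y' z' w'.

Lemma ptolemy_at_rot x y z w : ptolemy_at y z w x = ptolemy_at x y z w.
Proof.
by rewrite /ptolemy_at (gdist_sym z x) (gdist_sym w x) (gdist_sym y x); apply/idP/idP; lia.
Qed.

Lemma ptolemy_at_rev x y z w : ptolemy_at x w z y = ptolemy_at x y z w.
Proof.
by rewrite /ptolemy_at (gdist_sym w y) (gdist_sym z y) (gdist_sym w z); apply/idP/idP; lia.
Qed.

Lemma dist_sum_rot x y z w : dist_sum y z w x = dist_sum x y z w.
Proof. by rewrite /dist_sum (gdist_sym z x) (gdist_sym w x) (gdist_sym y x); lia. Qed.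

Lemma dist_sum_rev x y z w : dist_sum x w z y = dist_sum x y z w.
Proof. by rewrite /dist_sum (gdist_sym w y) (gdist_sym z y) (gdist_sym w z); lia. Qed.

Lemma minimal_violation_rot x y z w :
  minimal_violation x y z w -> minimal_violation y z w x.
Proof.
case=> viol minimal; split=> [|x' y' z' w']; first by rewrite ptolemy_at_rot.
by rewrite [dist_sum y z w x]dist_sum_rot; apply: minimal.
Qed.

Lemma minimal_violation_rev x y z w :
  minimal_violation x y z w -> minimal_violation x w z y.
Proof.
case=> viol minimal; split=> [|x' y' z' w']; first by rewrite ptolemy_at_rev.
by rewrite [dist_sum x w z y]dist_sum_rev; apply: minimal.
Qed.

Lemma violation_neq x y z w : ~~ ptolemy_at x y z w -> x != y.
Proof. by apply: contraNneq => ->; rewrite /ptolemy_at gdist_refl mul0n add0n. Qed.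

Lemma violation_diag_gt0 x y z w : ~~ ptolemy_at x y z w -> 0 < d x z.
Proof. by rewrite lt0n; apply: contraNneq => p0; rewrite /ptolemy_at p0. Qed.

Lemma gluing_at_vertex a m b s t : e m s -> e m t -> d s t = 2 ->
  (d s a).+1 = d m a -> (d t b).+1 = d m b -> d a b = d m a + d m b.
Proof.
move=> ms mt st sa mb; rewrite (gdist_sym m a).
have am : d a m = (d a s).+1 by rewrite !(gdist_sym a).
have sm : d s m = 1 by rewrite gdist_sym gdist_edge.
have mt1 := gdist_edge mt.
have ne_mt : m != t by apply: contraTneq mt => ->; rewrite e_irr.
have ne_sm : s != m by apply: contraTneq ms => ->; rewrite e_irr.
have sb := glue s m t b ne_mt ltac:(lia) ltac:(lia).
by have := glue a s m b ne_sm ltac:(lia) ltac:(lia); lia.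
Qed.

Lemma violation_step_gdist_le x y z w k : ~~ ptolemy_at x y z w ->
  e x k -> (d k y).+1 = d x y -> d k z <= d x z.
Proof.
move=> viol xk ky; have [s xs sz] := gdist_step (violation_diag_gt0 viol).
have ks : d k s <= 2.
  by have := gdist_triangle k x s; rewrite (gdist_sym k x) (gdist_edge xk) (gdist_edge xs).
have [ks2 | ks_lt2] := eqVneq (d k s) 2; last first.
  by have := gdist_triangle k s z; lia.
have yz := gluing_at_vertex xk xs ks2 ky sz.
have := gdist_triangle y x w; have := gdist_triangle x w z.
move: viol; rewrite /ptolemy_at -ltnNge yz (gdist_sym y x) (gdist_sym w z); nia.
Qed.

Lemma minimal_violation_no_common_step x y z w k : minimal_violation x y z w ->
  e x k -> (d k y).+1 = d x y -> (d k w).+1 = d x w -> False.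
Proof.
case=> viol minimal xk ky kw; move: viol; rewrite /ptolemy_at -ltnNge.
have xz := gdist_edge_le z xk; have kz : d k z <= (d x z).+1.
  by apply: gdist_edge_le; rewrite e_sym.
have := minimal k y z w; rewrite /dist_sum /ptolemy_at => /(_ ltac:(lia)).
have := gdist_triangle y z w; nia.
Qed.

Lemma minimal_violation_step_gdist x y z w k : minimal_violation x y z w ->
  e x k -> (d k y).+1 = d x y -> d k w = d x w -> (d k z).+1 = d x z.
Proof.
case=> viol minimal xk ky kw.
have kz := violation_step_gdist_le viol xk ky; have xz := gdist_edge_le z xk.
have [kz_eq | ] := eqVneq (d k z) (d x z); last lia.
move: viol; rewrite /ptolemy_at -ltnNge.
have := minimal k y z w; rewrite /dist_sum /ptolemy_at => /(_ ltac:(lia)).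
rewrite kz_eq kw -ky; nia.
Qed.

Definition split_corner x y z w t u : Prop :=
  [/\ e x t, e x u & e t u] /\
  [/\ (d t y).+1 = d x y, d t w = d x w & (d t z).+1 = d x z] /\
  [/\ (d u w).+1 = d x w, d u y = d x y & (d u z).+1 = d x z].

Lemma split_corner_rev x y z w t u :
  split_corner x y z w t u -> split_corner x w z y u t.
Proof. by case=> -[xt xu tu] [[ty tw tz] [uw uy uz]]; do !split; rewrite // e_sym. Qed.

Lemma split_corner_gdist x y z w t u :
  split_corner x y z w t u -> (d y w).+1 = d x y + d x w.
Proof.
case=> -[xt xu tu] [[ty tw tz] [uw uy uz]].
have [ty0 | ty_gt0] := posnP (d t y).
  by move: tw ty; rewrite (gdist_eq0 ty0) gdist_refl; lia.
have [t1 tt1 t1y] := gdist_step ty_gt0.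
have t1u : d t1 u = 2.
  have := gdist_triangle t1 t u; have := gdist_triangle u t1 y.
  by rewrite (gdist_sym t1 t) (gdist_sym u t1) (gdist_edge tt1) (gdist_edge tu); lia.
have := gluing_at_vertex tt1 tu t1u t1y (etrans uw (esym tw)); lia.
Qed.

Lemma minimal_violation_tight_or_split x y z w : minimal_violation x y z w ->
  d y w = d x y + d x w \/ exists t u, split_corner x y z w t u.
Proof.
move=> mv; have viol := mv.1.
have xy : 0 < d x y by rewrite gdist_gt0 (violation_neq viol).
have xw : 0 < d x w by rewrite gdist_gt0 (@violation_neq x w z y) // ptolemy_at_rev.
have [t xt ty] := gdist_step xy; have [u xu uw] := gdist_step xw.
have tu : d t u <= 2.
  by have := gdist_triangle t x u; rewrite (gdist_sym t x) (gdist_edge xt) (gdist_edge xu).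
have [tu2 | tu_ne2] := eqVneq (d t u) 2.
  by left; apply: gluing_at_vertex xt xu tu2 ty uw.
have [tu0 | tu_gt0] := posnP (d t u).
  by case: (minimal_violation_no_common_step mv xt ty); rewrite (gdist_eq0 tu0).
have e_tu : e t u by rewrite -gdist1; lia.
have tw : d t w = d x w.
  have := gdist_edge_le w e_tu; have := gdist_edge_le w xt.
  have := minimal_violation_no_common_step mv xt ty; lia.
have uy : d u y = d x y.
  have e_ut : e u t by rewrite e_sym.
  have := gdist_edge_le y e_ut; have := gdist_edge_le y xu.
  have := minimal_violation_no_common_step (minimal_violation_rev mv) xu uw; lia.
right; exists t, u; split=> //; split; split=> //.
  exact: minimal_violation_step_gdist mv xt ty tw.
exact: minimal_violation_step_gdist (minimal_violation_rev mv) xu uw uy.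
Qed.

Lemma split_corner_bound x y z w t u : minimal_violation x y z w ->
  split_corner x y z w t u -> d x z * d y w + d z w <= d x y * d z w + d y z * d x w + d y w.
Proof.
case=> _ minimal [[xt _ _] [[ty tw tz] _]].
have := minimal t y z w; rewrite /dist_sum /ptolemy_at -ty -tz tw.
by move=> /(_ ltac:(lia)); rewrite !mulSn; lia.
Qed.

Lemma minimal_violation_corner x y z w : minimal_violation x y z w ->
  corner_condition (d x y) (d y z) (d z w) (d x w) (d x z) (d y w).
Proof.
move=> mv; case: (minimal_violation_tight_or_split mv) => [|[t [u split]]]; first by left.
have := split_corner_bound (minimal_violation_rev mv) (split_corner_rev split).
rewrite (gdist_sym w y) (gdist_sym z y) (gdist_sym w z) => bound_u.
right; split; [exact: split_corner_gdist split | exact: split_corner_bound mv split | lia].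
Qed.

Lemma tight_corners_not_adjacent x y z w : ~~ ptolemy_at x y z w ->
  d y w = d x y + d x w -> d x z = d y z + d x y -> False.
Proof.
move=> viol yw xz; have := glue w x y z (violation_neq viol).
rewrite (gdist_sym w x) (gdist_sym w y) (gdist_sym w z) => /(_ ltac:(lia) ltac:(lia)) zw.
by move: viol; rewrite /ptolemy_at -zw yw xz; nia.
Qed.

Section MinimalViolation.
Variables x y z w : T.
Hypothesis mv : minimal_violation x y z w.

Lemma minimal_violation_square :
  [/\ d x y = 2, d y z = 2, d z w = 2, d x w = 2 & d x z = 3 /\ d y w = 3].
Proof.
have mv_y := minimal_violation_rot mv; have mv_z := minimal_violation_rot mv_y.
have mv_w := minimal_violation_rot mv_z.
have := minimal_violation_corner mv_y; have := minimal_violation_corner mv_z.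
have := minimal_violation_corner mv_w.
have := tight_corners_not_adjacent mv_y.1; have := tight_corners_not_adjacent mv_z.1.
have := tight_corners_not_adjacent mv_w.1.
rewrite (gdist_sym w x) (gdist_sym y x) (gdist_sym z x).
rewrite (gdist_sym z y) (gdist_sym w y) (gdist_sym w z).
move=> wx zw yz cw cz cy.
apply: (corner_conditions_square _ (minimal_violation_corner mv) cy cz cw _ yz zw wx).
- by move: mv.1; rewrite /ptolemy_at ltnNge.
- exact: tight_corners_not_adjacent mv.1.
Qed.

(* Ptolemy at small quadruples around the split corners at x and z. *)
Lemma minimal_violation_absurd : False.
Proof.
have [xy yz zw xw [xz yw]] := minimal_violation_square.
have small x' y' z' w' : dist_sum x' y' z' w' < 14 -> ptolemy_at x' y' z' w'.
  by move=> lt14; apply: mv.2; rewrite /dist_sum xy yz zw xw xz yw.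
have [|[tx [ux]]] := minimal_violation_tight_or_split mv; first lia.
case=> -[x_tx x_ux tx_ux] [[tx_y tx_w tx_z] [ux_w ux_y ux_z]].
have mv_z := minimal_violation_rot (minimal_violation_rot mv).
have [|[tz [uz]]] := minimal_violation_tight_or_split mv_z.
  by rewrite (gdist_sym w y) (gdist_sym z y); lia.
case=> -[z_tz z_uz tz_uz] [[tz_w tz_y tz_x] [uz_y uz_w uz_x]].
rewrite (gdist_sym z y) (gdist_sym z x) in tz_y tz_x uz_y uz_x.
have xtx := gdist_edge x_tx; have xux := gdist_edge x_ux; have txux := gdist_edge tx_ux.
have ztz := gdist_edge z_tz; have zuz := gdist_edge z_uz; have tzuz := gdist_edge tz_uz.
have tx_uz : d tx uz <= 1.
  have := gdist_triangle tx y uz; have := small x tx y uz.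
  by rewrite /dist_sum /ptolemy_at (gdist_sym y uz) (gdist_sym x uz); lia.
have ux_tz : d ux tz <= 1.
  have := gdist_triangle ux w tz; have := small x ux w tz.
  by rewrite /dist_sum /ptolemy_at (gdist_sym w tz) (gdist_sym x tz); lia.
have tx_tz : 0 < d tx tz.
  by rewrite gdist_gt0; apply/eqP => tx_eq; move: tx_w; rewrite tx_eq; lia.
have uz_ux : 0 < d uz ux.
  by rewrite gdist_gt0; apply/eqP => uz_eq; move: uz_y; rewrite uz_eq; lia.
have [tx_tz1 | uz_ux1] : d tx tz = 1 \/ d uz ux = 1.
  have := gdist_triangle tx uz tz; have := gdist_triangle uz tz ux.
  have := small tx uz tz ux.
  by rewrite /dist_sum /ptolemy_at (gdist_sym uz tz) (gdist_sym tz ux); nia.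
- have := small x tx tz w.
  by rewrite /dist_sum /ptolemy_at (gdist_sym x tz); lia.
- have := small x ux uz y.
  by rewrite /dist_sum /ptolemy_at (gdist_sym x uz) (gdist_sym ux uz); lia.
Qed.
End MinimalViolation.

Lemma geodesic_gluing_ptolemaic : ptolemaic e.
Proof.
suff ptol_lt n x y z w : dist_sum x y z w < n -> ptolemy_at x y z w.
  by move=> x y z w; apply: (ptol_lt (dist_sum x y z w).+1).
elim: n x y z w => // n IHn x y z w lt_n; apply: contraT => viol.
elim: (@minimal_violation_absurd x y z w); split=> // x' y' z' w' lt'.
by apply: IHn; apply: leq_trans lt' _.
Qed.
End Ptolemy.
End Distance.

Theorem propositionB1 (T : finType) (e : rel T)
  (e_sym : symmetric e) (e_irr : irreflexive e) (e_conn : gconnected e) :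
  let d := gdist e in
  [<-> ptolemaic e;
       forall x y z w : T, y != z ->
         d x y + d y z = d x z -> d y z + d z w = d y w ->
         d x y + d y z + d z w = d x w;
       forall x y z w : T,
         d x y + d y z = d x z -> d y z + d z w = d y w ->
         d x y = 1 -> d y z = 1 ->
         d x y + d y z + d z w = d x w;
       chordal e /\ distance_hereditary e].
Proof.
move=> d; rewrite {}/d; tfae.
- exact: ptolemaic_geodesic_gluing e_conn.
- move=> glue x y z w xyz yzw xy yz; apply: glue => //.
  by apply/eqP => y_z; move: yz; rewrite y_z gdist_refl.
- move=> glue1; split.
    exact: edge_gluing_chordal e_irr e_conn glue1.
  exact: edge_gluing_distance_hereditary e_irr e_conn glue1.
- case=> chordal_e dh_e; apply: (geodesic_gluing_ptolemaic e_sym e_irr e_conn).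
  apply: (edge_gluing_geodesic e_sym e_irr e_conn).
  exact: chordal_distance_hereditary_edge_gluing e_sym e_irr e_conn chordal_e dh_e.
Qed.
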